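(* Let $r\ge1$, let $\kappa\ge\max\{\tfrac32m_2-1,2\}$, and let $U_0\in\mathcal X_{m_2}$. Then for every time step $\tau>0$, the iterates of the rescaled ETDRK$r$ scheme ($U^0=U_0$, $U^{n+1}=W_r^n(\tau)$) satisfy $\|U^n(\boldsymbol x)\|_{\rm F}\le\sqrt{m_2}$ for all $n\ge1$ and all $\boldsymbol x\in\Omega$.
   Context: Let $d\in\{1,2,3\}$ and let $\Omega\subset\mathbb{R}^d$ be a rectangular box, all functions on $\Omega$ being $\Omega$-periodic. Let $m_1\ge m_2\ge1$ be integers, $\varepsilon>0$, $\kappa>0$. $\|\cdot\|_{\rm F}$ is the Frobenius norm. For $U\in\mathbb{R}^{m_1\times m_2}$, $f(U)=U-UU^\top U$ and $\mathcal N[U]=\kappa U+f(U)$ (applied pointwise to functions). $\mathcal X$ is the Banach space of continuous $\Omega$-periodic functions $\overline\Omega\to\mathbb{R}^{m_1\times m_2}$ with norm $\|W\|_{\mathcal X}=\max_{\boldsymbol x}\|W(\boldsymbol x)\|_{\rm F}$, and $\mathcal X_{m_2}=\{W\in\mathcal X:\|W\|_{\mathcal X}\le\sqrt{m_2}\}$. $\mathcal L_\kappa=\varepsilon^2\Delta-\kappa\mathcal I$ with periodic boundary conditions, acting componentwise, and $e^{t\mathcal L_\kappa}=e^{-\kappa t}e^{t\varepsilon^2\Delta}$ with $e^{t\varepsilon^2\Delta}$ the periodic heat semigroup. Rescaled ETDRK scheme: for each $j\ge1$ fix nodes $0=a_{j,0}<a_{j,1}<\dots<a_{j,j}=1$.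 Given a time step $\tau>0$ and $U^n\in\mathcal X$, define for $s\in[0,\tau]$: $W_1^n(s)=e^{s\mathcal L_\kappa}U^n+\int_0^s e^{(s-\sigma)\mathcal L_\kappa}\mathcal N[U^n]\,\mathrm d\sigma$. Recursively for $j\ge1$: let $P_j^n(s,\boldsymbol x)$ be the unique polynomial in $s$ of degree $\le j$ with coefficients in $\mathbb{R}^{m_1\times m_2}$ (depending on $\boldsymbol x$) such that $P_j^n(0,\boldsymbol x)=\mathcal N[U^n(\boldsymbol x)]$ and $P_j^n(a_{j,k}\tau,\boldsymbol x)=\mathcal N[W_j^n(a_{j,k}\tau,\boldsymbol x)]$ for $k=1,\dots,j$; let $\alpha_j^n(\boldsymbol x)=\min\{\kappa\sqrt{m_2}/\max_{s\in[0,\tau]}\|P_j^n(s,\boldsymbol x)\|_{\rm F},\,1\}$ (taken to be $1$ if the maximum is $0$), $\widetilde P_j^n(s,\boldsymbol x)=\alpha_j^n(\boldsymbol x)P_j^n(s,\boldsymbol x)$, and $W_{j+1}^n(s)=e^{s\mathcal L_\kappa}U^n+\int_0^s e^{(s-\sigma)\mathcal L_\kappa}\widetilde P_j^n(\sigma)\,\mathrm d\sigma$. The rescaled ETDRK$r$ scheme is $U^0=U_0$, $U^{n+1}=W_r^n(\tau)$ for $n\ge0$. *)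

From mathcomp Require Import all_boot all_order all_algebra.
From mathcomp Require Import all_classical all_reals all_analysis.
Set Implicit Arguments.
Unset Strict Implicit.
Unset Printing Implicit Defensive.
Import Order.TTheory GRing.Theory Num.Theory.
Import numFieldNormedType.Exports.
Local Open Scope classical_set_scope.
Local Open Scope ring_scope.

Section ETDRK.
Variables (R : realType) (d m1 m2 : nat).

Definition pt := 'rV[R]_d.
Definition field := pt -> 'M[R]_(m1, m2).

Definition frob (A : 'M[R]_(m1, m2)) : R :=
  Num.sqrt (\sum_(i < m1) \sum_(j < m2) A i j ^+ 2).

Definition fAC (A : 'M[R]_(m1, m2)) : 'M[R]_(m1, m2) := A - A *m A^T *m A.
Definition Nop (kappa : R) (A : 'M[R]_(m1, m2)) : 'M[R]_(m1, m2) :=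
  kappa *: A + fAC A.

Definition in_box (lo hi : 'I_d -> R) (x : pt) : Prop :=
  forall i, lo i <= x ord0 i <= hi i.
Definition unit_vec (i : 'I_d) : pt := delta_mx ord0 i.
Definition box_periodic (lo hi : 'I_d -> R) (U : field) : Prop :=
  forall x i, U (x + (hi i - lo i) *: unit_vec i) = U x.

Definition gauss (t z : R) : R :=
  expR (- (z ^+ 2) / (4 * t)) / Num.sqrt (4 * pi * t).

Definition heat_dir (i : 'I_d) (t : R) (u : field) : field :=
  fun x => if t <= 0 then u x else
    \matrix_(p < m1, q < m2)
      (\int[@lebesgue_measure R]_(z in [set: R]) (gauss t z * u (x - z *: unit_vec i) p q)).

(* the heat semigroup e^{t Delta} on R^d (with periodic data): convolution
   with the d-dimensional Gauss kernel, written as the product of the 1-d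
   kernels, i.e. composition of the directional flows *)
Definition heat (t : R) (u : field) : field :=
  foldr (fun i v => heat_dir i t v) u (enum 'I_d).

(* e^{s L_kappa} = e^{-kappa s} e^{s eps^2 Delta} *)
Definition semigroupL (eps kappa s : R) (u : field) : field :=
  fun x => expR (- kappa * s) *: heat (eps ^+ 2 * s) u x.

Definition duhamel (eps kappa s : R) (F : R -> field) : field :=
  fun x => \matrix_(p < m1, q < m2)
    (\int[@lebesgue_measure R]_(sigma in `[0, s])
        (semigroupL eps kappa (s - sigma) (F sigma) x p q)).

Definition interp (j : nat) (t : nat -> R) (v : nat -> 'M[R]_(m1, m2)) (s : R)
  : 'M[R]_(m1, m2) :=
  \sum_(k < j.+1)
     (\prod_(l < j.+1 | l != k) ((s - t l) / (t k - t l))) *: v k.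

(* One step of the rescaled ETDRK scheme.
   a j k = a_{j,k};  Wstage j = W_{j+1}^n (a function of s). *)
Section Step.
Variables (eps kappa tau : R) (a : nat -> nat -> R) (U : field).

Definition Pj (j : nat) (Wj : R -> field) (s : R) (x : pt) : 'M[R]_(m1, m2) :=
  interp j (fun k => a j k * tau)
    (fun k => if k == 0%N then Nop kappa (U x) else Nop kappa (Wj (a j k * tau) x)) s.

Definition alpha (j : nat) (Wj : R -> field) (x : pt) : R :=
  let M := sup [set frob (Pj j Wj s x) | s in `[0, tau]] in
  if M == 0 then 1 else Num.min (kappa * Num.sqrt m2%:R / M) 1.

Definition Ptilde (j : nat) (Wj : R -> field) (s : R) : field :=
  fun x => alpha j Wj x *: Pj j Wj s x.

Fixpoint Wstage (j : nat) : R -> field :=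
  match j with
  | 0%N => fun s x => semigroupL eps kappa s U x
                      + duhamel eps kappa s (fun _ => fun y => Nop kappa (U y)) x
  | j'.+1 => fun s x => semigroupL eps kappa s U x
                      + duhamel eps kappa s (Ptilde j (Wstage j')) x
  end.

End Step.

Fixpoint etdrk (r : nat) (eps kappa tau : R) (a : nat -> nat -> R) (U0 : field)
  (n : nat) : field :=
  match n with
  | 0%N => U0
  | n'.+1 => Wstage eps kappa tau a (etdrk r eps kappa tau a U0 n') r.-1 tau
  end.

End ETDRK.

(* A stage W(tau) = e^{tau L} U + int_0^tau e^{(tau - sigma) L} F(sigma) dsigma of the
   scheme is a weighted average in disguise.  The heat semigroup convolves with a
   probability density, and the Frobenius norm of an integral is at most the integral
   of the Frobenius norm, so |U| <= sqrt m2 and |F| <= kappa sqrt m2 pointwise give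
   |W(tau)| <= e^{-kappa tau} sqrt m2 + (1 - e^{-kappa tau}) sqrt m2 = sqrt m2.
   The forcing obeys this bound in the first stage because, with B = U^T U,
   |N[U]|^2 = tr (B (kappa + 1 - B)^2) is kappa^2 m2 minus two nonnegative terms when
   |U|^2 <= m2 and kappa >= max (m2 / 2, 2); in the later stages the cut-off alpha
   enforces it.  The integrands need not be measurable: only monotonicity and
   superadditivity of the integral of nonnegative functions, defined as a supremum
   over simple functions, are used. *)

From mathcomp Require Import all_boot all_order all_algebra.
From mathcomp Require Import all_classical all_reals all_analysis.
From mathcomp Require Import ring lra.
Import Order.TTheory GRing.Theory Num.Theory.
Import numFieldNormedType.Exports.
Set Implicit Arguments.
Unset Strict Implicit.
Unset Printing Implicit Defensive.
Local Open Scope classical_set_scope.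
Local Open Scope ring_scope.

Section SumOfSquares.
Variable R : realType.

Definition ssq (I : finType) (a : I -> R) : R := \sum_i a i ^+ 2.

Lemma ssq_ge0 (I : finType) (a : I -> R) : 0 <= ssq a.
Proof. by apply: sumr_ge0 => i _; exact: sqr_ge0. Qed.

Lemma ssq_norm (I : finType) (a : I -> R) : ssq (fun i => `|a i|) = ssq a.
Proof. by apply: eq_bigr => i _; rewrite real_normK ?num_real. Qed.

Lemma sqr_sum_mul_le (I : finType) (a b : I -> R) :
  (\sum_i a i * b i) ^+ 2 <= ssq a * ssq b.
Proof.
set A := ssq a; set B := ssq b; set C := \sum_i a i * b i.
have [B0|B_neq0] := eqVneq B 0.
  have b0 i : b i = 0.
    move: B0 => /eqP; rewrite psumr_eq0; last by move=> j _; exact: sqr_ge0.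
    by move=> /allP /(_ i (mem_index_enum _)); rewrite sqrf_eq0 => /eqP.
  rewrite /C big1 ?expr0n ?mulr_ge0 ?ssq_ge0 // => i _.
  by rewrite b0 mulr0.
have B_gt0 : 0 < B by rewrite lt_def B_neq0 ssq_ge0.
(* 0 <= sum_i (B a_i - C b_i)^2 = B (A B - C^2) *)
have : 0 <= \sum_i (B * a i - C * b i) ^+ 2 by exact: ssq_ge0.
have -> : \sum_i (B * a i - C * b i) ^+ 2 = B * (A * B - C ^+ 2).
  rewrite (eq_bigr (fun i => B ^+ 2 * a i ^+ 2 - 2 * B * C * (a i * b i) + C ^+ 2 * b i ^+ 2));
    last by move=> i _; ring.
  rewrite !big_split /= sumrN -!mulr_sumr -/C /A /B /ssq; ring.
by rewrite pmulr_rge0 // subr_ge0.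
Qed.

Lemma sum_mul_le (I : finType) (a b : I -> R) :
  \sum_i a i * b i <= Num.sqrt (ssq a) * Num.sqrt (ssq b).
Proof.
rewrite -sqrtrM ?ssq_ge0 //; have [C_le0|C_gt0] := leP (\sum_i a i * b i) 0.
  exact: le_trans C_le0 (sqrtr_ge0 _).
by rewrite -(ger0_norm (ltW C_gt0)) -sqrtr_sqr ler_sqrt ?mulr_ge0 ?ssq_ge0 ?sqr_sum_mul_le.
Qed.

Lemma sqrt_ssqD_le (I : finType) (a b : I -> R) :
  Num.sqrt (ssq (fun i => a i + b i)) <= Num.sqrt (ssq a) + Num.sqrt (ssq b).
Proof.
rewrite -(ger0_norm (addr_ge0 (sqrtr_ge0 (ssq a)) (sqrtr_ge0 (ssq b)))) -sqrtr_sqr.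
rewrite ler_sqrt ?sqr_ge0 // sqrrD !sqr_sqrtr ?ssq_ge0 //.
have -> : ssq (fun i => a i + b i) = ssq a + (\sum_i a i * b i) *+ 2 + ssq b.
  by rewrite /ssq -sumrMnl -!big_split; apply: eq_bigr => i _; rewrite sqrrD.
by rewrite lerD2r lerD2l lerMn2r sum_mul_le.
Qed.

End SumOfSquares.

Section NonMeasurableIntegral.
Local Open Scope ereal_scope.
Context {dT : measure_display} {T : measurableType dT} {R : realType}.
Variables (mu : {measure set T -> \bar R}) (D : set T).
Import HBNNSimple.

Lemma ereal_supD_le (A B : set (\bar R)) (M : \bar R) : A 0 -> B 0 ->
  (forall a, A a -> 0 <= a) -> (forall a b, A a -> B b -> a + b <= M) ->
  ereal_sup A + ereal_sup B <= M.
Proof.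
move=> A0 B0 A_ge0 ABM.
have supB_ge0 : 0 <= ereal_sup B by exact: ereal_sup_ubound.
have aBM a : A a -> a + ereal_sup B <= M.
  move=> Aa; have [a_fin|] := boolP (a \is a fin_num).
    rewrite addeC -leeBrDr //; apply: ge_ereal_sup => b Bb.
    by rewrite leeBrDr // addeC; exact: ABM.
  rewrite fin_numE negb_and !negbK => /orP[/eqP aNy|/eqP ay].
    by have := A_ge0 a Aa; rewrite aNy.
  by have := ABM a 0 Aa B0; rewrite ay adde0 leye_eq => /eqP ->; exact: leey.
have [supB_fin|] := boolP (ereal_sup B \is a fin_num).
  by rewrite -leeBrDr //; apply: ge_ereal_sup => a Aa; rewrite leeBrDr // aBM.
rewrite fin_numE negb_and !negbK => /orP[/eqP supBNy|/eqP supBy].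
  by move: supB_ge0; rewrite supBNy.
by have := aBM 0 A0; rewrite supBy add0e leye_eq => /eqP ->; exact: leey.
Qed.

Lemma le_ge0_integral (f g : T -> \bar R) : (forall x, D x -> 0 <= f x) ->
  (forall x, D x -> f x <= g x) ->
  \int[mu]_(x in D) f x <= \int[mu]_(x in D) g x.
Proof.
move=> f_ge0 fg; have g_ge0 x : D x -> 0 <= g x.
  by move=> Dx; exact: le_trans (f_ge0 x Dx) (fg x Dx).
rewrite !ge0_integralE //; apply: ereal_sup_le => _ [h /= hf <-].
exists h => //= x; apply: le_trans (hf x) _.
by rewrite /patch; case: ifP => // /set_mem Dx; exact: fg.
Qed.

Let nnsfun0_le (f : T -> \bar R) : (forall x, D x -> 0 <= f x) ->
  [set h : {nnsfun T >-> R} | forall x, (h x)%:E <= (f \_ D) x] nnsfun0.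
Proof. by move=> f_ge0 x; rewrite /patch; case: ifP => // /set_mem /f_ge0. Qed.

Lemma ge0_integralD_ge (f g : T -> \bar R) :
  (forall x, D x -> 0 <= f x) -> (forall x, D x -> 0 <= g x) ->
  \int[mu]_(x in D) f x + \int[mu]_(x in D) g x <= \int[mu]_(x in D) (f x + g x).
Proof.
move=> f_ge0 g_ge0; have fg_ge0 x : D x -> 0 <= f x + g x.
  by move=> Dx; rewrite adde_ge0 ?f_ge0 ?g_ge0.
rewrite !ge0_integralE //; apply: ereal_supD_le.
- by exists nnsfun0; [exact: nnsfun0_le | exact: sintegral0].
- by exists nnsfun0; [exact: nnsfun0_le | exact: sintegral0].
- by move=> _ [h _ <-]; exact: sintegral_ge0.
move=> _ _ [h1 /= h1f <-] [h2 /= h2f <-].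
rewrite -sintegralD; apply: ereal_sup_ubound; exists (add_nnsfun h1 h2) => //= x.
move: (h1f x) (h2f x); rewrite /patch EFinD; case: ifP => _; first exact: leeD.
rewrite (_ : point = 0) // => h1x h2x.
by apply: le_trans (leeD h1x h2x) _; rewrite adde0.
Qed.

Lemma ge0_integralZl_ge (k : R) (f : T -> \bar R) : (0 <= k)%R ->
  (forall x, D x -> 0 <= f x) ->
  k%:E * \int[mu]_(x in D) f x <= \int[mu]_(x in D) (k%:E * f x).
Proof.
move=> k_ge0 f_ge0; have kf_ge0 x : D x -> 0 <= k%:E * f x.
  by move=> Dx; rewrite mule_ge0 ?f_ge0.
rewrite !ge0_integralE // -ereal_supZl //; last first.
  by apply/set0P; exists 0, nnsfun0; [exact: nnsfun0_le | exact: sintegral0].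
apply: ereal_sup_le => _ [_ [h /= hf <-] <-].
exists (scale_nnsfun h k_ge0); last by rewrite sintegralrM.
move=> /= x; move: (hf x); rewrite /patch EFinM; case: ifP => _ hx.
  by rewrite lee_wpmul2l ?lee_fin.
by move: hx; rewrite !lee_fin => hx; rewrite mulr_ge0_le0.
Qed.

Lemma ge0_integral_sum_ge (I : Type) (r : seq I) (F : I -> T -> \bar R) :
  (forall i x, D x -> 0 <= F i x) ->
  \sum_(i <- r) \int[mu]_(x in D) F i x <= \int[mu]_(x in D) \sum_(i <- r) F i x.
Proof.
move=> F_ge0; elim: r => [|i r IH].
  by rewrite big_nil; apply: integral_ge0 => x _; rewrite big_nil.
under [X in _ <= X]eq_integral do rewrite big_cons.
rewrite big_cons; apply: le_trans (leeD2l _ IH) _.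
apply: ge0_integralD_ge => [x /F_ge0 //|x Dx].
by apply: sume_ge0 => j _; exact: F_ge0.
Qed.

End NonMeasurableIntegral.

Section IntegralNorm.
Context {dT : measure_display} {T : measurableType dT} {R : realType}.
Variables (mu : {measure set T -> \bar R}) (D : set T).

Lemma norm_fineB_le (x y : \bar R) : (0 <= x)%E -> (0 <= y)%E ->
  `|fine (x - y)| <= fine x + fine y.
Proof.
case: x y => [x| |] [y| |] //= x_ge0 y_ge0; rewrite ?normr0 ?addr0 ?add0r ?fine_ge0 //.
by apply: le_trans (ler_normB _ _) _; rewrite !ger0_norm -?lee_fin.
Qed.

Lemma fine_le_ge0 (x : \bar R) : (0 <= x)%E -> ((fine x)%:E <= x)%E.
Proof. by case: x. Qed.

(* No integrability is needed: [Rintegral] is [fine (P - N)], which is 0 as soon as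
   the integral P of the positive part or N of the negative part is infinite. *)
Lemma norm_Rintegral_le (f : T -> R) :
  (`|\int[mu]_(x in D) f x|%:E <= \int[mu]_(x in D) `|f x|%:E)%E.
Proof.
rewrite /Rintegral integralE.
set P := (\int[mu]_(x in D) _)%E; set N := (\int[mu]_(x in D) _)%E.
have P_ge0 : (0 <= P)%E by apply: integral_ge0 => x _; exact: funepos_ge0.
have N_ge0 : (0 <= N)%E by apply: integral_ge0 => x _; exact: funeneg_ge0.
apply: (@le_trans _ _ (P + N)%E).
  apply: le_trans (_ : (fine P + fine N)%:E <= _)%E.
    by rewrite lee_fin norm_fineB_le.
  by rewrite EFinD leeD ?fine_le_ge0.
apply: le_trans (ge0_integralD_ge mu _ _) _.
- by move=> x _; exact: funepos_ge0.
- by move=> x _; exact: funeneg_ge0.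
apply: le_ge0_integral => [x _|x _]; first by rewrite adde_ge0 ?funepos_ge0 ?funeneg_ge0.
by have /(congr1 (fun h => h x)) /= <- := fune_abse (EFin \o f).
Qed.

(* the dual characterisation of the Euclidean norm, tested against [w = V / |V|] *)
Lemma sqrt_ssq_Rintegral_le (I : finType) (f : I -> T -> R) (G : T -> R) :
  (forall x, D x -> Num.sqrt (ssq (fun i => f i x)) <= G x) ->
  (\int[mu]_(x in D) (G x)%:E < +oo)%E ->
  Num.sqrt (ssq (fun i => \int[mu]_(x in D) f i x)) <= \int[mu]_(x in D) G x.
Proof.
move=> fG G_fin.
have G_ge0 x : D x -> 0 <= G x by move=> Dx; exact: le_trans (sqrtr_ge0 _) (fG x Dx).
have intG_ge0 : (0 <= \int[mu]_(x in D) (G x)%:E)%E.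
  by apply: integral_ge0 => x Dx; rewrite lee_fin G_ge0.
set V := fun i => \int[mu]_(x in D) f i x; set S := Num.sqrt (ssq V).
have [S0|S_neq0] := eqVneq S 0; first by rewrite S0 fine_ge0.
have S_gt0 : 0 < S by rewrite lt_def S_neq0 sqrtr_ge0.
pose w i := V i / S.
have ssq_w : ssq w = 1.
  rewrite /ssq (eq_bigr (fun i => V i ^+ 2 / S ^+ 2)); last by move=> i _; rewrite expr_div_n.
  rewrite -mulr_suml sqr_sqrtr ?ssq_ge0 // divff //.
  by apply: contraNneq S_neq0 => ssqV0; rewrite /S /ssq ssqV0 sqrtr0.
have S_sum : S = \sum_i w i * V i.
  apply: (mulIf S_neq0); rewrite -expr2 sqr_sqrtr ?ssq_ge0 // mulr_suml.
  by apply: eq_bigr => i _; rewrite mulrAC divfK.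
rewrite -lee_fin /Rintegral fineK ?ge0_fin_numE // S_sum -sumEFin.
apply: (@le_trans _ _ (\sum_i \int[mu]_(x in D) (`|w i|%:E * `|f i x|%:E))%E).
  apply: lee_sum => i _; apply: le_trans (ge0_integralZl_ge mu _ _); last 2 first.
  - exact: normr_ge0.
  - by move=> x _; rewrite lee_fin.
  apply: le_trans (_ : `|w i * V i|%:E <= _)%E; first by rewrite lee_fin ler_norm.
  by rewrite normrM EFinM lee_wpmul2l ?lee_fin ?norm_Rintegral_le.
apply: le_trans (ge0_integral_sum_ge mu _ _) _; first by move=> i x _; rewrite -EFinM lee_fin.
apply: le_ge0_integral => [x _|x Dx]; first by rewrite sume_ge0 // => i _; rewrite -EFinM lee_fin.
under eq_bigr do rewrite -EFinM.
rewrite sumEFin lee_fin; apply: le_trans (sum_mul_le _ _) _.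
by rewrite !ssq_norm ssq_w sqrtr1 mul1r fG.
Qed.

End IntegralNorm.

Section Frobenius.
Variable R : realType.

Lemma frob_ssq m n (A : 'M[R]_(m, n)) :
  frob A = Num.sqrt (ssq (fun ij : 'I_m * 'I_n => A ij.1 ij.2)).
Proof. by rewrite /frob /ssq pair_bigA. Qed.

Lemma frob_ge0 m n (A : 'M[R]_(m, n)) : 0 <= frob A.
Proof. exact: sqrtr_ge0. Qed.

Lemma frob0 m n : frob (0 : 'M[R]_(m, n)) = 0.
Proof.
rewrite /frob big1 ?sqrtr0 // => i _; rewrite big1 // => j _.
by rewrite mxE expr0n.
Qed.

Lemma frobZ m n (c : R) (A : 'M[R]_(m, n)) : frob (c *: A) = `|c| * frob A.
Proof.
rewrite /frob -sqrtr_sqr -sqrtrM ?sqr_ge0 // mulr_sumr; congr Num.sqrt.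
apply: eq_bigr => i _; rewrite mulr_sumr; apply: eq_bigr => j _.
by rewrite mxE exprMn.
Qed.

Lemma ler_frobD m n (A B : 'M[R]_(m, n)) : frob (A + B) <= frob A + frob B.
Proof.
by rewrite !frob_ssq; under eq_fun do rewrite mxE; exact: sqrt_ssqD_le.
Qed.

Lemma ler_frob_sum m n (I : Type) (r : seq I) (F : I -> 'M[R]_(m, n)) :
  frob (\sum_(i <- r) F i) <= \sum_(i <- r) frob (F i).
Proof.
elim: r => [|i r IH]; first by rewrite !big_nil frob0.
by rewrite !big_cons; apply: le_trans (ler_frobD _ _) _; rewrite lerD2l.
Qed.

Lemma sqr_frobE m n (A : 'M[R]_(m, n)) : frob A ^+ 2 = \sum_i \sum_j A i j ^+ 2.
Proof. by rewrite sqr_sqrtr // sumr_ge0 // => i _; rewrite sumr_ge0 // => j _; rewrite sqr_ge0. Qed.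

Lemma sqr_frob m n (A : 'M[R]_(m, n)) : frob A ^+ 2 = \tr (A^T *m A).
Proof.
rewrite sqr_frobE /mxtrace exchange_big; apply: eq_bigr => j _; rewrite mxE.
by apply: eq_bigr => i _; rewrite mxE expr2.
Qed.

Lemma ler_frobM m n p (A : 'M[R]_(m, n)) (B : 'M[R]_(n, p)) :
  frob (A *m B) <= frob A * frob B.
Proof.
rewrite -ler_sqr ?nnegrE ?mulr_ge0 ?frob_ge0 // exprMn !sqr_frobE mulr_suml; apply: ler_sum => i _.
rewrite [in X in _ <= X]exchange_big mulr_sumr; apply: ler_sum => k _.
by rewrite mxE; exact: (sqr_sum_mul_le (fun j => A i j) (fun j => B j k)).
Qed.

Context {dT : measure_display} {T : measurableType dT}.
Variables (mu : {measure set T -> \bar R}) (D : set T).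

Lemma frob_Rintegral_le m n (f : 'I_m -> 'I_n -> T -> R) (G : T -> R) :
  (forall x, D x -> frob (\matrix_(i, j) f i j x) <= G x) ->
  (\int[mu]_(x in D) (G x)%:E < +oo)%E ->
  frob (\matrix_(i, j) \int[mu]_(x in D) f i j x) <= \int[mu]_(x in D) G x.
Proof.
move=> fG G_fin; rewrite frob_ssq; under eq_fun do rewrite mxE.
apply: (sqrt_ssq_Rintegral_le (f := fun ij => f ij.1 ij.2)) => // x Dx.
by have := fG x Dx; rewrite frob_ssq; under eq_fun do rewrite mxE.
Qed.

End Frobenius.

Section HeatKernel.
Variable R : realType.
Local Notation mu := (@lebesgue_measure R).

Lemma gauss_normal_pdf (t : R) : 0 < t -> gauss t = normal_pdf 0 (Num.sqrt (t *+ 2)).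
Proof.
move=> t_gt0; apply/funext => z.
have s_neq0 : Num.sqrt (t *+ 2) != 0 by rewrite sqrtr_eq0 -ltNge pmulrn_lgt0.
rewrite /gauss normal_pdfE // /normal_peak /normal_fun subr0 sqr_sqrtr ?mulrn_wge0 ?ltW //.
rewrite (_ : t *+ 2 *+ 2 = 4 * t); last by ring.
by rewrite (_ : t *+ 2 * pi *+ 2 = 4 * pi * t) 1?mulrC //; ring.
Qed.

Lemma gauss_ge0 (t z : R) : 0 <= gauss t z.
Proof. by rewrite divr_ge0 ?expR_ge0 ?sqrtr_ge0. Qed.

Lemma integral_gaussZr (t B : R) : 0 < t -> 0 <= B ->
  (\int[mu]_z (gauss t z * B)%:E = B%:E)%E.
Proof.
move=> t_gt0 B_ge0; under eq_integral do rewrite EFinM.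
rewrite ge0_integralZr //=.
- by rewrite gauss_normal_pdf // integral_normal_pdf mul1e.
- by apply/measurable_realfun.measurable_EFinP; rewrite gauss_normal_pdf //; exact: measurable_normal_pdf.
- by move=> z _; rewrite lee_fin gauss_ge0.
Qed.

Lemma integral_exp (C k s : R) : 0 < k -> 0 < s ->
  (\int[mu]_(x in `[0%R, s]) (C * expR (k * x))%:E = (C / k * (expR (k * s) - 1))%:E)%E.
Proof.
move=> k_gt0 s_gt0; pose F x := C / k * expR (k * x).
have dF (x : R) : is_derive x (1 : R) F (C * expR (k * x)).
  have -> : C * expR (k * x) = C / k * (expR (k * x) * k) by field; rewrite gt_eqF.
  apply: is_deriveZ; apply: (is_derive1_comp (f := expR) (g := *%R k)).
  by rewrite -[X in is_derive _ _ _ X]mulr1; apply: is_deriveZ.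
have cF : continuous F.
  by move=> x; exact/differentiable_continuous/derivable1_diffP/(@ex_derive _ _ _ _ _ _ _ (dF x)).
rewrite (@continuous_FTC2 _ _ F) //.
- by rewrite /F mulr0 expR0 -EFinB mulrBr mulr1.
- apply: continuous_subspaceT => x; apply: cvgM; first exact: cvg_cst.
  apply: (@continuous_comp _ _ _ ( *%R k) expR); last exact: continuous_expR.
  by apply: cvgM; [exact: cvg_cst|exact: cvg_id].
- split; first by move=> x _; exact: ex_derive.
  + exact: cvg_at_right_filter (cF 0).
  + exact: cvg_at_left_filter (cF s).
- by move=> x _; rewrite derive1E derive_val.
Qed.

End HeatKernel.

Section SemigroupBounds.
Variables (R : realType) (d m1 m2 : nat).
Local Notation mu := (@lebesgue_measure R).
Local Notation field := (field R d m1 m2).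
Implicit Types (u : field) (B : R).

Lemma frob_heat_dir_le i t u B : 0 <= B ->
  (forall y, frob (u y) <= B) -> forall x, frob (heat_dir i t u x) <= B.
Proof.
move=> B_ge0 uB x; rewrite /heat_dir; case: ifPn => [_|]; first exact: uB.
rewrite -ltNge => t_gt0.
have -> : B = \int[mu]_z (gauss t z * B) by rewrite /Rintegral integral_gaussZr.
apply: frob_Rintegral_le; last by rewrite integral_gaussZr // ltry.
move=> z _; rewrite (_ : \matrix_(p, q) _ = gauss t z *: u (x - z *: unit_vec R i)).
  by rewrite frobZ ger0_norm ?gauss_ge0 // ler_wpM2l ?gauss_ge0.
by apply/matrixP => p q; rewrite !mxE.
Qed.

Lemma frob_heat_le t u B : 0 <= B ->
  (forall y, frob (u y) <= B) -> forall x, frob (heat t u x) <= B.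
Proof.
move=> B_ge0 uB; rewrite /heat; elim: (enum 'I_d) => [|i l IH] //=.
exact: frob_heat_dir_le.
Qed.

Lemma frob_semigroupL_le eps kappa s u B : 0 <= B ->
  (forall y, frob (u y) <= B) ->
  forall x, frob (semigroupL eps kappa s u x) <= expR (- kappa * s) * B.
Proof.
move=> B_ge0 uB x; rewrite /semigroupL frobZ ger0_norm ?expR_ge0 //.
by rewrite ler_wpM2l ?expR_ge0 ?frob_heat_le.
Qed.

Lemma frob_duhamel_le eps kappa s (F : R -> field) B :
  0 < kappa -> 0 < s -> 0 <= B ->
  (forall sigma, 0 <= sigma <= s -> forall y, frob (F sigma y) <= B) ->
  forall x, frob (duhamel eps kappa s F x) <= B / kappa * (1 - expR (- kappa * s)).
Proof.
move=> kappa_gt0 s_gt0 B_ge0 FB x; pose C := B * expR (- kappa * s).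
have CE sigma : C * expR (kappa * sigma) = expR (- kappa * (s - sigma)) * B.
  by rewrite /C -mulrA -expRD mulrC; congr (expR _ * _); ring.
have -> : B / kappa * (1 - expR (- kappa * s)) =
          \int[mu]_(sigma in `[0, s]) (C * expR (kappa * sigma)).
  rewrite /Rintegral integral_exp //= /C mulNr expRN; field.
  by rewrite expR_eq0 gt_eqF.
apply: frob_Rintegral_le; last by rewrite integral_exp // ltry.
move=> sigma; rewrite /= in_itv /= => sigma_in.
rewrite (_ : \matrix_(p, q) _ = semigroupL eps kappa (s - sigma) (F sigma) x).
  by rewrite CE; apply: frob_semigroupL_le => // y; exact: FB.
by apply/matrixP => p q; rewrite !mxE.
Qed.

End SemigroupBounds.

Section Nonlinearity.
Variable R : realType.

Lemma Nop_mulmx m n (kappa : R) (A : 'M[R]_(m, n.+1)) :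
  Nop kappa A = A *m (kappa%:M + 1 - A^T *m A).
Proof. by rewrite /Nop /fAC mulmxBr mulmxDr mul_mx_scalar mulmx1 mulmxA addrA. Qed.

Lemma mx_Nop_sqr_expand n (K : R) (B : 'M[R]_n.+1) :
  B * ((K%:M + 1 - B) * (K%:M + 1 - B)) =
  (K * K)%:M + (K * (K - 2))%:M * (B - 1) - (B - 1) * ((K *+ 2)%:M - B) * (B - 1).
Proof.
have poly_id : 'X * ((K%:P + 1 - 'X) * (K%:P + 1 - 'X)) =
  (K * K)%:P + (K * (K - 2))%:P * ('X - 1) - ('X - 1) * ((K *+ 2)%:P - 'X) * ('X - 1)
  :> {poly R}.
  by rewrite !polyCM !polyCB polyCMn polyC1; ring.
have := congr1 (horner_mx B) poly_id.
by rewrite !(rmorphM, rmorphD, rmorphB, rmorphN, rmorph1) /= !horner_mx_C !horner_mx_X.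
Qed.

Lemma sqr_frob_Nop m n (kappa : R) (A : 'M[R]_(m, n.+1)) (C := A^T *m A - 1) :
  frob (Nop kappa A) ^+ 2 = kappa ^+ 2 * n.+1%:R
    + kappa * (kappa - 2) * (frob A ^+ 2 - n.+1%:R)
    - (kappa *+ 2 * frob C ^+ 2 - frob (A *m C) ^+ 2).
Proof.
set B := A^T *m A; set M := kappa%:M + 1 - B.
have BT : B^T = B by rewrite trmx_mul trmxK.
have CT : C^T = C by rewrite linearB /= BT trmx1.
have MT : M^T = M by rewrite linearB linearD /= tr_scalar_mx trmx1 BT.
have trC : \tr C = frob A ^+ 2 - n.+1%:R by rewrite raddfB /= mxtrace1 sqr_frob.
have trCC : \tr (C * C) = frob C ^+ 2 by rewrite sqr_frob CT.
have trCBC : \tr (C * B * C) = frob (A *m C) ^+ 2.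
  by rewrite sqr_frob trmx_mul CT /B [in RHS]mulmxA -[in RHS](mulmxA C).
have CBC (X : 'M[R]_n.+1) (a : R) : X * (a%:M - B) * X = a *: (X * X) - X * B * X.
  by rewrite mulrBr mulrBl scalerAl (_ : X * a%:M = a *: X) //; exact: mul_mx_scalar.
rewrite sqr_frob Nop_mulmx -/B -/M trmx_mul MT mulmxA -(mulmxA M) -/B -mulmxA mxtrace_mulC.
rewrite (_ : B *m M *m M = B * (M * M)); last by rewrite -mulmxA.
rewrite mx_Nop_sqr_expand -/C; clearbody C.
rewrite CBC !raddfB /= mxtraceD mxtrace_scalar -[_%:M * C]/(_%:M *m C) mul_scalar_mx.
rewrite !mxtraceZ trC trCC trCBC mulr_natr; ring.
Qed.

(* only [kappa >= m2 / 2], implied by the hypothesis, is needed *)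
Lemma frob_Nop_le m n (kappa : R) (A : 'M[R]_(m, n)) : (0 < n)%N ->
  2 <= kappa -> 3 / 2 * n%:R - 1 <= kappa -> frob A <= Num.sqrt n%:R ->
  frob (Nop kappa A) <= kappa * Num.sqrt n%:R.
Proof.
case: n A => // n A _ kappa_ge2 kappa_ge fA.
have kappa_ge0 : 0 <= kappa by apply: le_trans kappa_ge2; rewrite ler0n.
set C := A^T *m A - 1.
have fA2 : frob A ^+ 2 <= n.+1%:R.
  by rewrite -[n.+1%:R]sqr_sqrtr ?ler0n // ler_sqr ?nnegrE ?frob_ge0 ?sqrtr_ge0.
have fAC : frob (A *m C) ^+ 2 <= frob A ^+ 2 * frob C ^+ 2.
  by rewrite -exprMn ler_sqr ?nnegrE ?mulr_ge0 ?frob_ge0 ?ler_frobM.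
have n_le : n.+1%:R <= kappa *+ 2.
  have n_ge1 : 1 <= n.+1%:R :> R by rewrite ler1n.
  by rewrite mulr2n; lra.
rewrite -ler_sqr ?nnegrE ?mulr_ge0 ?frob_ge0 ?sqrtr_ge0 //.
rewrite exprMn (sqr_sqrtr (ler0n R n.+1)) sqr_frob_Nop -/C.
have h1 : frob A ^+ 2 * frob C ^+ 2 <= kappa *+ 2 * frob C ^+ 2.
  by rewrite ler_wpM2r ?sqr_ge0 // (le_trans fA2).
have h2 : kappa * (kappa - 2) * (frob A ^+ 2 - n.+1%:R) <= 0.
  by rewrite mulr_ge0_le0 ?subr_le0 // mulr_ge0 // subr_ge0.
lra.
Qed.

End Nonlinearity.

Section Rescaling.
Variables (R : realType) (d m1 m2 : nat).

Lemma interp_bounded m n j (t : nat -> R) (v : nat -> 'M[R]_(m, n)) (T : R) :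
  exists M, forall s, `|s| <= T -> frob (interp j t v s) <= M.
Proof.
exists (\sum_(k < j.+1)
  (\prod_(l < j.+1 | l != k) ((T + `|t l|) * `|(t k - t l)^-1|)) * frob (v k)).
move=> s sT; apply: le_trans (ler_frob_sum _ _) _.
apply: ler_sum => k _; rewrite frobZ ler_wpM2r ?frob_ge0 // normr_prod.
apply: ler_prod => l _; rewrite normr_ge0 normrM ler_wpM2r //.
by apply: le_trans (ler_normB _ _) _; rewrite lerD2r.
Qed.

Lemma frob_Ptilde_le (kappa tau : R) a (U : field R d m1 m2) j Wj sigma x :
  0 < kappa -> 0 <= sigma <= tau ->
  frob (Ptilde kappa tau a U j Wj sigma x) <= kappa * Num.sqrt m2%:R.
Proof.
move=> kappa_gt0 /andP[sigma_ge0 sigma_le].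
set c := kappa * Num.sqrt m2%:R; have c_ge0 : 0 <= c by rewrite mulr_ge0 ?sqrtr_ge0 ?ltW.
set S := [set frob (Pj kappa tau a U j Wj s x) | s in `[0, tau]].
have [M PM] := interp_bounded j (fun k => a j k * tau)
  (fun k => if k == 0%N then Nop kappa (U x) else Nop kappa (Wj (a j k * tau) x)) tau.
have S_sup : has_sup S.
  split; first by exists (frob (Pj kappa tau a U j Wj sigma x)), sigma => //=;
    rewrite in_itv /= sigma_ge0.
  exists M => _ [s + <-]; rewrite /= in_itv /= => /andP[s_ge0 s_le].
  by apply: PM; rewrite ger0_norm.
have P_le : frob (Pj kappa tau a U j Wj sigma x) <= sup S.
  by apply: sup_upper_bound => //; exists sigma => //=; rewrite in_itv /= sigma_ge0.
rewrite /Ptilde frobZ /alpha -/S -/c; case: ifPn => [/eqP S0|S_neq0].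
  by rewrite normr1 mul1r (le_trans P_le) // S0.
have S_gt0 : 0 < sup S by rewrite lt_def S_neq0 (le_trans (frob_ge0 _) P_le).
have alpha_ge0 : 0 <= Num.min (c / sup S) 1 by rewrite le_min ler01 andbT divr_ge0 ?(ltW S_gt0).
rewrite ger0_norm //; apply: le_trans (ler_wpM2l alpha_ge0 P_le) _.
by rewrite -{2}(divfK (lt0r_neq0 S_gt0) c) ler_pM2r // ge_min lexx.
Qed.

End Rescaling.

Section Stability.
Variables (R : realType) (d m1 m2 : nat).

Lemma frob_Wstage_le (eps kappa tau : R) a (U : field R d m1 m2) j :
  (0 < m2)%N -> 2 <= kappa -> 3 / 2 * m2%:R - 1 <= kappa -> 0 < tau ->
  (forall y, frob (U y) <= Num.sqrt m2%:R) ->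
  forall x, frob (Wstage eps kappa tau a U j tau x) <= Num.sqrt m2%:R.
Proof.
move=> m2_gt0 kappa_ge2 kappa_ge tau_gt0 U_le x.
have kappa_gt0 : 0 < kappa by apply: lt_le_trans kappa_ge2; rewrite ltr0n.
set s := Num.sqrt m2%:R; have s_ge0 : 0 <= s := sqrtr_ge0 _.
(* [e^{-kappa tau} s + (kappa s / kappa) (1 - e^{-kappa tau}) = s] *)
suff step (F : R -> field R d m1 m2) :
    (forall sigma, 0 <= sigma <= tau -> forall y, frob (F sigma y) <= kappa * s) ->
    frob (semigroupL eps kappa tau U x + duhamel eps kappa tau F x) <= s.
  by case: j => [|j] /=; apply: step => sigma sigma_in y;
    [exact: frob_Nop_le | exact: frob_Ptilde_le].
move=> F_le; apply: le_trans (ler_frobD _ _) _.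
apply: le_trans (lerD (frob_semigroupL_le eps kappa tau s_ge0 U_le x)
  (frob_duhamel_le eps kappa_gt0 tau_gt0 (mulr_ge0 (ltW kappa_gt0) s_ge0) F_le x)) _.
by rewrite [kappa * s]mulrC mulfK ?gt_eqF //; lra.
Qed.

End Stability.

Unset Implicit Arguments.

Theorem theorem3p1 (R : realType) (d m1 m2 : nat)
  (lo hi : 'I_d -> R) (eps kappa : R) (r : nat)
  (a : nat -> nat -> R) (U0 : field R d m1 m2) :
  (1 <= d <= 3)%N ->
  (forall i, lo i < hi i) ->
  (1 <= m2 <= m1)%N ->
  0 < eps ->
  (3 / 2 * m2%:R - 1 <= kappa) -> (2 <= kappa) ->
  (forall j : nat, (1 <= j)%N ->
     a j 0%N = 0 /\ a j j = 1 /\ (forall k : nat, (k < j)%N -> a j k < a j k.+1)) ->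
  (1 <= r)%N ->
  {in [set: pt R d], continuous U0} ->
  box_periodic lo hi U0 ->
  (forall x, frob (U0 x) <= Num.sqrt m2%:R) ->
  forall tau : R, 0 < tau ->
  forall n : nat, (1 <= n)%N ->
  forall x : pt R d, in_box lo hi x ->
    frob (etdrk r eps kappa tau a U0 n x) <= Num.sqrt m2%:R.
Proof.
move=> _ _ /andP[m2_gt0 _] _ kappa_ge kappa_ge2 _ _ _ _ U0_le tau tau_gt0 n _ x _.
elim: n x => [|n IH] x /=; first exact: U0_le.
exact: frob_Wstage_le.
Qed.
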